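(* Let $x\in\mathfrak{g}=\mathfrak{gl}(n+1,\mathbb{C})$ be regular nilpotent and suppose $x\in\mathfrak{b}$ for a Borel subalgebra $\mathfrak{b}\in Q_{+,n+1}\cup Q_{-,n+1}$. Then $x_n$ is regular nilpotent in $\mathfrak{g}_n$ and $\mathfrak{z}_{\mathfrak{g}_n}(x_n)\cap\mathfrak{z}_{\mathfrak{g}}(x)=0$.
   Context: $n\ge1$. $\mathfrak{g}_n\cong\mathfrak{gl}(n,\mathbb{C})$ is embedded in $\mathfrak{g}$ as matrices supported in the upper left $n\times n$ corner, $x_n$ is the upper left $n\times n$ submatrix of $x$ (viewed in $\mathfrak{g}_n$), and $\mathfrak{z}$ denotes centralizers. $K_{n+1}=GL(n,\mathbb{C})\times GL(1,\mathbb{C})$ is the group of invertible block diagonal matrices with blocks of sizes $n$ and $1$, acting by conjugation on the flag variety $\mathcal{B}_{n+1}$ of $\mathfrak{g}$. $Q_{+,n+1}$ (resp. $Q_{-,n+1}$) is the $K_{n+1}$-orbit of the Borel subalgebra of upper (resp. lower) triangular matrices. *)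

From HB Require Import structures.
From mathcomp Require Import all_boot all_order all_algebra.
From mathcomp Require Import complex.
From mathcomp Require Import Rstruct.
Set Implicit Arguments. Unset Strict Implicit. Unset Printing Implicit Defensive.
Import Order.TTheory GRing.Theory Num.Theory.
Local Open Scope ring_scope.

Notation CC := (complex Rdefinitions.R).
Definition CC_closed : closedFieldType := CC.

Definition nilpotent_mx m (x : 'M[CC]_m) : Prop := exists k : nat, x ^+ k = 0.

(* dimension of the centralizer z_{gl(m)}(x) = {y | y x = x y} *)
Definition centralizer_dim m (x : 'M[CC]_m) : nat := \rank (cent_mx (mxvec x)).

(* regular: dim z(x) = rank of gl(m) = m *)
Definition regular_mx m (x : 'M[CC]_m) : Prop := centralizer_dim x = m.

Definition regular_nilpotent m (x : 'M[CC]_m) : Prop :=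
  nilpotent_mx x /\ regular_mx x.

(* upper / lower triangular matrices (Borel subalgebras b_+ and b_-) *)
Definition upper_tri m (y : 'M[CC]_m) : Prop := forall i j : 'I_m, (j < i)%N -> y i j = 0.
Definition lower_tri m (y : 'M[CC]_m) : Prop := forall i j : 'I_m, (i < j)%N -> y i j = 0.

(* K_{n+1} = GL(n) x GL(1): invertible block diagonal matrices, blocks n and 1 *)
Definition in_K n (k : 'M[CC]_n.+1) : Prop :=
  k \in unitmx /\
  forall i j : 'I_n.+1, (i == ord_max) != (j == ord_max) -> k i j = 0.

(* x belongs to a Borel subalgebra in Q_+ = K.b_+ (resp. Q_- = K.b_-):
   x \in k b_+ k^-1 for some k in K *)
Definition in_borel_Qplus n (x : 'M[CC]_n.+1) : Prop :=
  exists2 k, in_K k & upper_tri (invmx k *m x *m k).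
Definition in_borel_Qminus n (x : 'M[CC]_n.+1) : Prop :=
  exists2 k, in_K k & lower_tri (invmx k *m x *m k).

(* x_n : upper-left n x n submatrix *)
Definition corner n (x : 'M[CC]_n.+1) : 'M[CC]_n :=
  \matrix_(i, j) x (lift ord_max i) (lift ord_max j).

(* embedding g_n -> g as matrices supported in the upper left corner *)
Definition embed n (y : 'M[CC]_n) : 'M[CC]_n.+1 :=
  \matrix_(i, j) match unlift ord_max i, unlift ord_max j with
                 | Some i', Some j' => y i' j'
                 | _, _ => 0
                 end.

(* Conjugating by an element of K = GL(n) x GL(1) and transposing both respect
   the block decomposition, so we may assume that x is upper triangular; being
   nilpotent, it is then strictly upper triangular.  A nilpotent matrix x of
   index m+1 < n+1 has a centralizer of dimension > n+1: for a fixed phi with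
   phi x^m v = 1, the map w |-> sum_(j<=m) x^j (w phi) x^(m-j) is injective and
   its image is an (n+1)-dimensional space of matrices commuting with x, all of
   rank <= m+1, hence not containing the identity.  So regularity forces
   x^n <> 0, i.e. all superdiagonal entries of x are nonzero, and the same then
   holds for the corner x_n.  A matrix M commuting with such a matrix is
   determined by M v for any v with nonzero last coordinate, because the
   vectors x^k v form a triangular basis.  This gives both dim z(x_n) <= n and,
   taking for v the last column of x above the diagonal (which every y in
   z(x_n) /\ z(x) annihilates), z(x_n) /\ z(x) = 0. *)

From HB Require Import structures.
From mathcomp Require Import all_boot all_order all_algebra.
From mathcomp Require Import complex Rstruct.
From mathcomp Require Import zify.
Set Implicit Arguments. Unset Strict Implicit. Unset Printing Implicit Defensive.
Import Order.TTheory GRing.Theory Num.Theory.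
Local Open Scope ring_scope.

Section StrictlyUpper.
Variable F : fieldType.

Definition strictly_upper N (y : 'M[F]_N) :=
  forall i j : 'I_N, (j <= i)%N -> y i j = 0.

Definition upper_triangular N (y : 'M[F]_N) :=
  forall i j : 'I_N, (j < i)%N -> y i j = 0.

Definition nonzero_superdiag N (y : 'M[F]_N) :=
  forall i j : 'I_N, j = i.+1 :> nat -> y i j != 0.

Lemma expmx_strictly_upper_eq0 N (y : 'M[F]_N) j (a b : 'I_N) :
  strictly_upper y -> (b < a + j)%N -> (y ^+ j) a b = 0.
Proof.
move=> y_su; elim: j a b => [|j IHj] a b lt_b_aj.
  by rewrite expr0 mxE; case: eqP => // a_b; move: lt_b_aj; rewrite a_b; lia.
rewrite exprSr -mulmxE mxE big1 // => l _.
have [lt_l_aj | le_aj_l] := ltnP l (a + j); first by rewrite IHj ?mul0r.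
by rewrite y_su ?mulr0 //; lia.
Qed.

Lemma strictly_upper_expn_eq0 N (y : 'M[F]_N) : strictly_upper y -> y ^+ N = 0.
Proof.
move=> y_su; apply/matrixP => a b; rewrite mxE expmx_strictly_upper_eq0 //.
by have := ltn_ord b; lia.
Qed.

Lemma expmx_strictly_upper_superdiag N (y : 'M[F]_N.+1) (j : nat) (a b : 'I_N.+1) :
  strictly_upper y -> b = (a + j)%N :> nat ->
  (y ^+ j) a b = \prod_(t < j) y (inord (a + t)) (inord (a + t).+1).
Proof.
move=> y_su; elim: j b => [|j IHj] b b_aj.
  by rewrite expr0 big_ord0 mxE (_ : a = b) ?eqxx //; apply: ord_inj => /=; lia.
have lt_aj : (a + j < N.+1)%N by have := ltn_ord b; lia.
rewrite exprSr -mulmxE mxE (bigD1 (Ordinal lt_aj)) //= big1 ?addr0.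
  rewrite [RHS]big_ord_recr /= (IHj (Ordinal lt_aj)) //.
  by congr (_ * y _ _); apply: ord_inj; rewrite /= inordK //; have := ltn_ord b; lia.
move=> l /eqP l_aj; have [lt_l_aj | le_aj_l] := ltnP l (a + j).
  by rewrite expmx_strictly_upper_eq0 ?mul0r.
rewrite y_su ?mulr0 //; suff : l != (a + j)%N :> nat by lia.
by apply/eqP => e; apply: l_aj; exact: ord_inj.
Qed.

Lemma strictly_upper_expn_neq0 N (y : 'M[F]_N.+1) :
  strictly_upper y -> y ^+ N != 0 <-> nonzero_superdiag y.
Proof.
move=> y_su; split=> [yN_neq0 i j j_i | y_sd].
  apply: contra_neq yN_neq0 => yij0; apply/matrixP => a b; rewrite mxE.
  have [lt_b_aN | le_aN_b] := ltnP b (a + N).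
    by rewrite expmx_strictly_upper_eq0.
  have [a0 lt_i_N] : a = 0 :> nat /\ (i < N)%N.
    by have := ltn_ord b; have := ltn_ord j; lia.
  rewrite (expmx_strictly_upper_superdiag y_su); last by have := ltn_ord b; lia.
  rewrite (bigD1 (Ordinal lt_i_N)) //= a0 add0n.
  rewrite (_ : inord i = i); last by apply: ord_inj; rewrite inordK.
  by rewrite (_ : inord i.+1 = j) ?yij0 ?mul0r //; apply: ord_inj; rewrite inordK -j_i.
apply/eqP => /matrixP/(_ 0 ord_max); rewrite mxE.
rewrite (expmx_strictly_upper_superdiag y_su) //= => /eqP.
rewrite prodf_seq_eq0 => /hasP[t _ /=]; apply/negP.
by apply: y_sd; have lt_t_N := ltn_ord t; rewrite add0n !inordK //; lia.
Qed.

Lemma expmx_upper_eq0 N (y : 'M[F]_N) j (a b : 'I_N) :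
  upper_triangular y -> (b < a)%N -> (y ^+ j) a b = 0.
Proof.
move=> y_up; elim: j a b => [|j IHj] a b lt_b_a.
  by rewrite expr0 mxE; case: eqP => // a_b; move: lt_b_a; rewrite a_b ltnn.
rewrite exprSr -mulmxE mxE big1 // => l _.
have [lt_l_a | le_a_l] := ltnP l a; first by rewrite IHj ?mul0r.
by rewrite y_up ?mulr0 //; lia.
Qed.

Lemma diag_expmx_upper N (y : 'M[F]_N) j (a : 'I_N) :
  upper_triangular y -> (y ^+ j) a a = y a a ^+ j.
Proof.
move=> y_up; elim: j => [|j IHj]; first by rewrite !expr0 mxE eqxx.
rewrite exprSr -mulmxE mxE (bigD1 a) //= big1 ?addr0; first by rewrite IHj exprSr.
move=> l /eqP l_a; have [lt_l_a | le_a_l] := ltnP l a.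
  by rewrite expmx_upper_eq0 ?mul0r.
rewrite y_up ?mulr0 //; rewrite ltn_neqAle le_a_l andbT.
by apply/eqP => e; apply: l_a; exact: ord_inj.
Qed.

Lemma nilpotent_upper_strictly_upper N (y : 'M[F]_N) k :
  upper_triangular y -> y ^+ k = 0 -> strictly_upper y.
Proof.
move=> y_up yk0 i j; rewrite leq_eqVlt => /orP[/eqP ji | ]; last exact: y_up.
have -> : i = j by apply: ord_inj.
have /eqP := diag_expmx_upper k j y_up.
by rewrite yk0 mxE eq_sym expf_eq0 => /andP[_ /eqP].
Qed.

Lemma mulmx_upper_family_eq0 p N (M : 'M[F]_(p, N)) (w : 'I_N -> 'cV[F]_N) :
  (forall c, w c c 0 != 0) -> (forall c a : 'I_N, (c < a)%N -> w c a 0 = 0) ->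
  (forall c, M *m w c = 0) -> M = 0.
Proof.
move=> w_diag w_up Mw0; pose W := \matrix_(a, c) w c a 0.
have W_unit : W \in unitmx.
  rewrite unitmxE -det_tr det_trig; last first.
    by apply/is_trig_mxP => i j lt_ij; rewrite !mxE w_up.
  by rewrite unitfE prodf_seq_neq0; apply/allP => c _; rewrite !mxE w_diag.
have MW0 : M *m W = 0.
  apply/matrixP => i c; transitivity ((M *m w c) i 0); last by rewrite Mw0 !mxE.
  by rewrite !mxE; apply: eq_bigr => a _; rewrite mxE.
by rewrite -[M](mulmxK W_unit) MW0 mul0mx.
Qed.

(* The vectors [y ^+ (N - c) *m v] form a triangular basis annihilated by [M]. *)
Lemma cent_strictly_upper_eq0 N (y M : 'M[F]_N.+1) (v : 'cV[F]_N.+1) :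
  strictly_upper y -> nonzero_superdiag y -> v ord_max 0 != 0 ->
  M *m y = y *m M -> M *m v = 0 -> M = 0.
Proof.
move=> y_su y_sd v_last yM Mv0.
apply: (@mulmx_upper_family_eq0 _ _ M (fun c => y ^+ (N - c) *m v)) => [c|c a lt_ca|c].
- rewrite mxE (bigD1 ord_max) //= big1 ?addr0 => [|b /eqP b_max].
    rewrite mulf_neq0 // (expmx_strictly_upper_superdiag y_su); last first.
      by have := ltn_ord c; rewrite /=; lia.
    rewrite prodf_seq_neq0; apply/allP => t _; apply/implyP => _.
    have lt_t := ltn_ord t; have lt_c := ltn_ord c.
    by apply: y_sd; rewrite !inordK //; lia.
  rewrite expmx_strictly_upper_eq0 ?mul0r //; suff : b != N :> nat.
    by have := ltn_ord b; have := ltn_ord c; lia.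
  by apply/eqP => e; apply: b_max; exact: ord_inj.
- rewrite mxE big1 // => b _; rewrite expmx_strictly_upper_eq0 ?mul0r //.
  by have := ltn_ord b; have := ltn_ord c; lia.
- by rewrite mulmxA mulmxE (commrX _ yM) -mulmxE -mulmxA Mv0 mulmx0.
Qed.

End StrictlyUpper.

Section CentralizerRank.
Variable F : fieldType.

Lemma expmx_conj N (P y : 'M[F]_N) k : P \in unitmx ->
  (invmx P *m y *m P) ^+ k = invmx P *m y ^+ k *m P.
Proof.
move=> P_unit; elim: k => [|k IHk]; first by rewrite !expr0 mulmx1 mulVmx.
by rewrite !exprSr -!mulmxE IHk !mulmxA mulmxK.
Qed.

Lemma conjmx_eq0 N (P A : 'M[F]_N) : P \in unitmx -> (invmx P *m A *m P == 0) = (A == 0).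
Proof.
move=> P_unit; apply/eqP/eqP => [A0 | ->]; last by rewrite mulmx0 mul0mx.
have -> : A = P *m (invmx P *m A *m P) *m invmx P.
  by rewrite !mulmxA mulmxV // mul1mx mulmxK.
by rewrite A0 mulmx0 mul0mx.
Qed.

Lemma trmxX N (A : 'M[F]_N) k : (A ^+ k)^T = A^T ^+ k.
Proof.
elim: k => [|k IHk]; first by rewrite !expr0 trmx1.
by rewrite exprSr exprS -!mulmxE trmx_mul IHk.
Qed.

Lemma mem_cent_mxvec N (y M : 'M[F]_N) : (M \in 'C(mxvec y))%MS = (M *m y == y *m M).
Proof.
by apply/cent_rowP/eqP => [/(_ 0) | yM i]; rewrite row_id mxvecK.
Qed.

Lemma rank_cent_mx_le N p q s (y : 'M[F]_N) (f : {linear 'M[F]_N -> 'M[F]_(p, q)})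
    (S : 'M[F]_(s, p * q)) :
  (forall M, M *m y = y *m M -> (mxvec (f M) <= S)%MS) ->
  (forall M, M *m y = y *m M -> f M = 0 -> M = 0) ->
  (\rank 'C(mxvec y) <= \rank S)%N.
Proof.
move=> f_S f_inj; set C := 'C(mxvec y)%MS.
have C_comm (r : 'rV_(N * N)) : (r <= C)%MS -> vec_mx r *m y = y *m vec_mx r.
  by move=> r_C; apply/eqP; rewrite -mem_cent_mxvec vec_mxK.
rewrite -(mxrank_mul_ker C (lin_mx f)).
have /eqP -> : (C :&: kermx (lin_mx f))%MS == 0.
  apply/rowV0P => r; rewrite sub_capmx => /andP[r_C /sub_kermxP].
  rewrite -[r]vec_mxK mul_vec_lin => /eqP; rewrite mxvec_eq0 => /eqP fr0.
  by rewrite (f_inj _ (C_comm r r_C) fr0) linear0.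
rewrite mxrank0 addn0 mxrankS //; apply/row_subP => i.
by rewrite row_mul -[row i C]vec_mxK mul_vec_lin f_S // C_comm // row_sub.
Qed.

Lemma comm_conjmx N (P y M : 'M[F]_N) : P \in unitmx ->
  M *m y = y *m M -> (invmx P *m M *m P) *m (invmx P *m y *m P) =
                     (invmx P *m y *m P) *m (invmx P *m M *m P).
Proof.
move=> P_unit yM; rewrite -!mulmxA !(mulmxA P) !mulmxV // !mul1mx.
by rewrite (mulmxA M) yM !mulmxA.
Qed.

Lemma rank_cent_mx_conj N (P y : 'M[F]_N) : P \in unitmx ->
  \rank 'C(mxvec (invmx P *m y *m P)) = \rank 'C(mxvec y).
Proof.
have le_conj (Q z : 'M[F]_N) : Q \in unitmx ->
    (\rank 'C(mxvec (invmx Q *m z *m Q)) <= \rank 'C(mxvec z))%N.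
  move=> Q_unit; have Qi_unit : invmx Q \in unitmx by rewrite unitmx_inv.
  have conjK : Q *m (invmx Q *m z *m Q) *m invmx Q = z.
    by rewrite !mulmxA mulmxV // mul1mx mulmxK.
  apply: (rank_cent_mx_le (f := mulmxr (invmx Q) \o mulmx Q)) => M zM /=.
    by rewrite mem_cent_mxvec; have /eqP := comm_conjmx Qi_unit zM; rewrite invmxK conjK.
  move/(congr1 (mulmx (invmx Q) \o mulmxr Q)) => /=.
  by rewrite mulmxKV // mul0mx mulmx0 mulKmx.
move=> P_unit; apply/eqP; rewrite eqn_leq le_conj //=.
have := le_conj (invmx P) (invmx P *m y *m P); rewrite unitmx_inv invmxK.
by rewrite !mulmxA mulmxV // mul1mx mulmxK //; apply.
Qed.

Lemma rank_cent_mx_tr N (y : 'M[F]_N) : \rank 'C(mxvec y^T) = \rank 'C(mxvec y).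
Proof.
have le_tr (z : 'M[F]_N) : (\rank 'C(mxvec z^T) <= \rank 'C(mxvec z))%N.
  apply: (rank_cent_mx_le (f := trmx)) => [M zM | M _ /(congr1 trmx)].
    by rewrite mem_cent_mxvec -{1}[z]trmxK -trmx_mul -zM trmx_mul trmxK.
  by rewrite trmxK trmx0.
by apply/eqP; rewrite eqn_leq le_tr -{1}[y]trmxK le_tr.
Qed.

Section NilpotentLowerBound.
Variables (N m : nat) (y : 'M[F]_N).
Hypothesis ym0 : y ^+ m.+1 = 0.

Lemma expmx_nil k : (m < k)%N -> y ^+ k = 0.
Proof. by move=> lt_mk; rewrite -(subnKC lt_mk) exprD ym0 mul0r. Qed.

(* [y *m theta Y - theta Y *m y] telescopes to [y ^+ m.+1 *m Y - Y *m y ^+ m.+1]. *)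
Definition theta (Y : 'M[F]_N) := \sum_(j < m.+1) y ^+ j *m Y *m y ^+ (m - j).

Lemma theta_comm Y : y *m theta Y = theta Y *m y.
Proof.
apply/eqP; rewrite -subr_eq0 /theta mulmx_sumr mulmx_suml -sumrB.
pose u k := y ^+ k *m Y *m y ^+ (m.+1 - k).
rewrite (eq_bigr (fun j : 'I_m.+1 => u j.+1 - u j)) => [|j _].
  rewrite -(big_mkord xpredT (fun j => u j.+1 - u j)) telescope_sumr //.
  by rewrite /u ym0 !(mul0mx, mulmx0) subrr.
have le_jm : (j <= m)%N by rewrite -ltnS.
by rewrite /u subSS (subSn le_jm) exprS exprSr -!mulmxE !mulmxA.
Qed.

Lemma theta_rank_le (w : 'cV[F]_N) (phi : 'rV[F]_N) :
  (\rank (theta (w *m phi)) <= m.+1)%N.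
Proof.
pose A := \matrix_(i < N, j < m.+1) (y ^+ j *m w) i 0.
pose B := \matrix_(j < m.+1, k < N) (phi *m y ^+ (m - j)) 0 k.
have -> : theta (w *m phi) = A *m B.
  apply/matrixP => i k; rewrite /theta summxE mxE; apply: eq_bigr => j _.
  rewrite (_ : _ *m _ *m _ = (y ^+ j *m w) *m (phi *m y ^+ (m - j))); last first.
    by rewrite !mulmxA.
  by rewrite [LHS]mxE big_ord1 !mxE.
exact: leq_trans (mxrankM_maxl _ _) (rank_leq_col _).
Qed.

Variables (phi : 'rV[F]_N) (v : 'cV[F]_N).
Hypothesis phi_v : phi *m y ^+ m *m v = 1%:M.

(* Multiplying [theta (w *m phi)] by [y ^+ j *m v] isolates the term [i = j]:
   for [i < j] the power of [y] exceeds [m], and the terms [i > j] vanish by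
   assumption. *)
Lemma theta_mul_expmx (w : 'cV[F]_N) (j : 'I_m.+1) :
  (forall i, (j < i)%N -> y ^+ i *m w = 0) ->
  theta (w *m phi) *m (y ^+ j *m v) = y ^+ j *m w.
Proof.
move=> w_above.
have term i : y ^+ i *m (w *m phi) *m y ^+ (m - i) *m (y ^+ j *m v) =
              y ^+ i *m w *m (phi *m y ^+ (m - i + j) *m v).
  by rewrite exprD -mulmxE !mulmxA.
rewrite /theta mulmx_suml (bigD1 j) //= big1 ?addr0 => [|i /eqP i_j].
  by rewrite term subnK -1?ltnS // phi_v mulmx1.
have [lt_ij | le_ji] := ltnP i j.
  rewrite term (expmx_nil (k := m - i + j)) ?(mulmx0, mul0mx) //.
  by have := ltn_ord i; lia.
rewrite term (w_above i) ?mul0mx // ltn_neqAle le_ji andbT.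
by apply/eqP => e; apply: i_j; exact: ord_inj.
Qed.

Lemma theta_rank1_inj (w : 'cV[F]_N) : theta (w *m phi) = 0 -> w = 0.
Proof.
move=> theta0; suff expw0 d j : (m < j + d)%N -> y ^+ j *m w = 0.
  by have := expw0 m.+1 0%N; rewrite expr0 mul1mx; apply.
elim: d j => [|d IHd] j lt_m_jd.
  by rewrite addn0 in lt_m_jd; rewrite expmx_nil ?mul0mx.
have [lt_m_jd' | le_jd_m] := ltnP m (j + d); first exact: IHd.
have lt_jm : (j < m.+1)%N by lia.
rewrite -(theta_mul_expmx (j := Ordinal lt_jm)) ?theta0 ?mul0mx // => i /= lt_ji.
by apply: IHd; lia.
Qed.

Definition theta_row (u : 'rV[F]_N) : 'rV[F]_(N * N) := mxvec (theta (u^T *m phi)).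

Fact theta_row_is_linear : linear theta_row.
Proof.
move=> a u1 u2; rewrite /theta_row -linearP /= linearP /= mulmxDl -scalemxAl.
congr mxvec; rewrite scaler_sumr -big_split /=; apply: eq_bigr => j _.
by rewrite mulmxDr mulmxDl -!scalemxAr -!scalemxAl.
Qed.

HB.instance Definition _ :=
  GRing.isLinear.Build F 'rV[F]_N 'rV[F]_(N * N) _ theta_row theta_row_is_linear.

Definition theta_mx := lin1_mx theta_row.

Lemma rank_theta_mx : \rank theta_mx = N.
Proof.
apply/eqP; rewrite eqn_leq rank_leq_row -subn_eq0 -mxrank_ker mxrank_eq0.
apply/rowV0P => u /sub_kermxP; rewrite mul_rV_lin1 /theta_row => /eqP.
by rewrite mxvec_eq0 => /eqP/theta_rank1_inj/(congr1 trmx); rewrite trmxK trmx0.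
Qed.

Lemma theta_mx_sub_cent : (theta_mx <= 'C(mxvec y))%MS.
Proof.
apply/row_subP => i; rewrite rowE mul_rV_lin1 /theta_row mem_cent_mxvec.
by rewrite theta_comm.
Qed.

Lemma mxvec1_notin_theta_mx : (m.+1 < N)%N -> ~~ (mxvec 1%:M <= theta_mx)%MS.
Proof.
move=> lt_mN; apply/negP => /submxP[D]; rewrite mul_rV_lin1 /theta_row.
move/(congr1 vec_mx); rewrite !mxvecK => one_theta.
by have := theta_rank_le D^T phi; rewrite -one_theta mxrank1; lia.
Qed.

End NilpotentLowerBound.

Lemma rank_cent_mx_nilpotent_ge N m (y : 'M[F]_N) :
  y ^+ m.+1 = 0 -> y ^+ m != 0 -> (N + (m.+1 < N) <= \rank 'C(mxvec y))%N.
Proof.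
move=> ym0 ym_neq0.
have [[a b] /= yab_neq0] : exists ab : 'I_N * 'I_N, (y ^+ m) ab.1 ab.2 != 0.
  apply/existsP; apply: contraR ym_neq0; rewrite negb_exists => /forallP y0.
  by apply/eqP/matrixP => i j; have := y0 (i, j); rewrite mxE negbK => /eqP.
pose phi : 'rV[F]_N := ((y ^+ m) a b)^-1 *: delta_mx 0 a.
pose v : 'cV[F]_N := delta_mx b 0.
have phi_v : phi *m y ^+ m *m v = 1%:M.
  rewrite -!scalemxAl -rowE -colE; apply/matrixP => i j.
  by rewrite !ord1 !mxE mulVf.
have := theta_mx_sub_cent ym0 phi; have := rank_theta_mx ym0 phi_v.
case: ltnP => [lt_mN | _] rank_theta theta_C.
  have one_C : (mxvec 1%:M <= 'C(mxvec y))%MS by rewrite mem_cent_mxvec mul1mx mulmx1.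
  set T := theta_mx _ y phi in rank_theta theta_C *.
  apply: leq_trans (mxrankS (_ : (T + mxvec 1%:M <= _)%MS)).
    rewrite addn1 -[X in (X < _)%N]rank_theta; apply: rank_ltmx.
    by rewrite ltmxE addsmxSl addsmx_sub submx_refl mxvec1_notin_theta_mx.
  by rewrite addsmx_sub theta_C one_C.
by rewrite addn0 -[X in (X <= _)%N]rank_theta mxrankS.
Qed.

End CentralizerRank.

Section RegularNilpotent.
Variable N : nat.
Implicit Types x P : 'M[CC]_N.

Lemma centralizer_dim_conj P x : P \in unitmx ->
  centralizer_dim (invmx P *m x *m P) = centralizer_dim x.
Proof. exact: rank_cent_mx_conj. Qed.

Lemma centralizer_dim_tr x : centralizer_dim x^T = centralizer_dim x.
Proof. exact: rank_cent_mx_tr. Qed.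

Lemma regular_nilpotent_conj P x : P \in unitmx ->
  regular_nilpotent (invmx P *m x *m P) <-> regular_nilpotent x.
Proof.
move=> P_unit; rewrite /regular_nilpotent /regular_mx centralizer_dim_conj //.
split=> -[[k xk0] reg]; split=> //; exists k.
  by apply/eqP; rewrite -(conjmx_eq0 _ P_unit) -expmx_conj // xk0.
by rewrite expmx_conj // xk0 mulmx0 mul0mx.
Qed.

Lemma regular_nilpotent_tr x : regular_nilpotent x^T <-> regular_nilpotent x.
Proof.
rewrite /regular_nilpotent /regular_mx centralizer_dim_tr.
split=> -[[k xk0] reg]; split=> //; exists k; apply/eqP.
  by rewrite -trmx_eq0 trmxX xk0.
by rewrite -trmxX trmx_eq0 xk0.
Qed.

End RegularNilpotent.

Lemma regular_nilpotent_expn_neq0 N (x : 'M[CC]_N.+1) :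
  regular_nilpotent x -> x ^+ N != 0.
Proof.
move=> [_ reg]; apply/negP => /eqP xN0.
have exN : exists k, x ^+ k == 0 by exists N; apply/eqP.
have [[|m] /eqP xm0 min_m] := ex_minnP exN.
  by move: xm0; rewrite expr0 => /eqP; rewrite oner_eq0.
have xm_neq0 : x ^+ m != 0 by apply/negP => /min_m; rewrite ltnn.
have := rank_cent_mx_nilpotent_ge xm0 xm_neq0; rewrite -/(centralizer_dim x) reg.
by have := min_m N (introT eqP xN0); case: ltnP => //; lia.
Qed.

Lemma strictly_upper_regular_nilpotent N (y : 'M[CC]_N.+1) :
  strictly_upper y -> nonzero_superdiag y -> regular_nilpotent y.
Proof.
move=> y_su y_sd; have yN1 := strictly_upper_expn_eq0 y_su.
split; first by exists N.+1.
apply/eqP; rewrite eqn_leq; apply/andP; split.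
  rewrite -[X in (_ <= X)%N]muln1 -(mxrank1 CC (N.+1 * 1)).
  apply: (rank_cent_mx_le (f := mulmxr (delta_mx ord_max 0))) => [M _ | M yM /= Mv0].
    exact: submx1.
  by apply: (cent_strictly_upper_eq0 y_su y_sd _ yM Mv0); rewrite mxE !eqxx oner_neq0.
have yN_neq0 := proj2 (strictly_upper_expn_neq0 y_su) y_sd.
by have := rank_cent_mx_nilpotent_ge yN1 yN_neq0; rewrite ltnn addn0.
Qed.

Section Corner.
Variable n : nat.
Implicit Types (A k t x : 'M[CC]_n.+1) (Y : 'M[CC]_n).

Definition block_diag k :=
  forall i j : 'I_n.+1, (i == ord_max) != (j == ord_max) -> k i j = 0.

Lemma lift_max_widen (i : 'I_n) : lift ord_max i = widen_ord (leqnSn n) i.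
Proof. by apply: ord_inj; rewrite /= /bump leqNgt ltn_ord. Qed.

Lemma val_lift_max (i : 'I_n) : lift ord_max i = i :> nat.
Proof. by rewrite lift_max_widen. Qed.

Lemma lift_max_eq (i : 'I_n) : (lift ord_max i == ord_max) = false.
Proof. by apply/negbTE; rewrite eq_sym neq_lift. Qed.

Lemma corner_mulmx_block_diagr A k : block_diag k ->
  corner (A *m k) = corner A *m corner k.
Proof.
move=> k_bd; apply/matrixP => i j; rewrite !mxE big_ord_recr /=.
rewrite [k ord_max _]k_bd ?mulr0 ?addr0 ?eqxx ?lift_max_eq //.
by apply: eq_bigr => l _; rewrite !mxE -lift_max_widen.
Qed.

Lemma corner_mulmx_block_diagl A k : block_diag k ->
  corner (k *m A) = corner k *m corner A.
Proof.
move=> k_bd; apply/matrixP => i j; rewrite !mxE big_ord_recr /=.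
rewrite [k _ ord_max]k_bd ?mul0r ?addr0 ?eqxx ?lift_max_eq //.
by apply: eq_bigr => l _; rewrite !mxE -lift_max_widen.
Qed.

Lemma corner1 : corner (1%:M : 'M[CC]_n.+1) = 1%:M.
Proof. by apply/matrixP => i j; rewrite !mxE (inj_eq lift_inj). Qed.

Lemma corner_tr A : corner A^T = (corner A)^T.
Proof. by apply/matrixP => i j; rewrite !mxE. Qed.

Lemma embed_tr Y : embed Y^T = (embed Y)^T.
Proof.
apply/matrixP => i j; rewrite !mxE.
by case: (unlift ord_max i) => [i'|]; case: (unlift ord_max j) => [j'|] //; rewrite mxE.
Qed.

Lemma embed_lift Y i j : embed Y (lift ord_max i) (lift ord_max j) = Y i j.
Proof. by rewrite mxE !liftK. Qed.

Lemma embed_max_col Y i : embed Y i ord_max = 0.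
Proof. by rewrite mxE unlift_none; case: (unlift _ _). Qed.

Lemma embed_max_row Y j : embed Y ord_max j = 0.
Proof. by rewrite mxE unlift_none. Qed.

Lemma embed_mulmx_block_diagr Y k : block_diag k ->
  embed Y *m k = embed (Y *m corner k).
Proof.
move=> k_bd; apply/matrixP => i j.
rewrite !mxE big_ord_recr /= embed_max_col mul0r addr0.
case: (unliftP ord_max i) => [i'|] ->; last first.
  by rewrite big1 // => l _; rewrite embed_max_row mul0r.
case: (unliftP ord_max j) => [j'|] ->; last first.
  by rewrite big1 // => l _; rewrite k_bd ?mulr0 // -lift_max_widen lift_max_eq eqxx.
by rewrite mxE; apply: eq_bigr => l _; rewrite -lift_max_widen embed_lift mxE.
Qed.

Lemma embed_mulmx_block_diagl Y k : block_diag k ->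
  k *m embed Y = embed (corner k *m Y).
Proof.
move=> k_bd; apply: trmx_inj; rewrite trmx_mul -!embed_tr embed_mulmx_block_diagr.
  by rewrite trmx_mul corner_tr.
by move=> i j ij; rewrite mxE k_bd // eq_sym.
Qed.

Lemma in_K_corner_unit k : in_K k -> corner k \in unitmx.
Proof.
move=> [k_unit k_bd].
have := corner_mulmx_block_diagr (invmx k) k_bd; rewrite mulVmx // corner1.
by move/esym/mulmx1_unit => [].
Qed.

Lemma corner_conj k x : in_K k ->
  corner (invmx k *m x *m k) = invmx (corner k) *m corner x *m corner k.
Proof.
move=> kK; have [k_unit k_bd] := kK; have kn_unit := in_K_corner_unit kK.
rewrite -[LHS](mulKmx kn_unit) -corner_mulmx_block_diagl // !mulmxA mulmxV //.
by rewrite mul1mx corner_mulmx_block_diagr // !mulmxA.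
Qed.

Lemma embed_conj k Y : in_K k ->
  embed (invmx (corner k) *m Y *m corner k) = invmx k *m embed Y *m k.
Proof.
move=> kK; have [k_unit k_bd] := kK; have kn_unit := in_K_corner_unit kK.
rewrite -[LHS](mulKmx k_unit) embed_mulmx_block_diagl // !mulmxA mulmxV //.
by rewrite mul1mx -embed_mulmx_block_diagr // !mulmxA.
Qed.

Definition last_col t : 'cV[CC]_n := \col_i t (lift ord_max i) ord_max.

Lemma cent_embed_mul_last_col Y t :
  embed Y *m t = t *m embed Y -> Y *m last_col t = 0.
Proof.
move=> /matrixP Yt; apply/matrixP => i j; rewrite ord1 [RHS]mxE.
have := Yt (lift ord_max i) ord_max; rewrite !mxE.
rewrite [X in _ = X]big1 => [|l _]; last by rewrite embed_max_col mulr0.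
rewrite big_ord_recr embed_max_col mul0r /= addr0 => sum0.
rewrite -[RHS]sum0; apply: eq_bigr => l _.
by rewrite -lift_max_widen embed_lift mxE.
Qed.

End Corner.

Definition corner_regular_transverse n (x : 'M[CC]_n.+1) : Prop :=
  regular_nilpotent (corner x) /\
  forall y : 'M[CC]_n,
    y *m corner x = corner x *m y -> embed y *m x = x *m embed y -> y = 0.

Lemma corner_regular_transverse_conj n (k x : 'M[CC]_n.+1) : in_K k ->
  corner_regular_transverse (invmx k *m x *m k) -> corner_regular_transverse x.
Proof.
move=> kK; have [k_unit _] := kK; have kn_unit := in_K_corner_unit kK.
rewrite /corner_regular_transverse corner_conj // regular_nilpotent_conj //.
case=> reg cent0; split=> // y yx yxn.
apply/eqP; rewrite -(conjmx_eq0 _ kn_unit); apply/eqP/cent0.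
  exact: comm_conjmx.
by rewrite embed_conj //; exact: comm_conjmx.
Qed.

Lemma corner_regular_transverse_tr n (x : 'M[CC]_n.+1) :
  corner_regular_transverse x^T -> corner_regular_transverse x.
Proof.
rewrite /corner_regular_transverse corner_tr regular_nilpotent_tr.
case=> reg cent0; split=> // y yx yxn; apply: trmx_inj; rewrite trmx0.
by apply: cent0; rewrite ?embed_tr -!trmx_mul ?yx ?yxn.
Qed.

Lemma strictly_upper_corner_regular_transverse n (t : 'M[CC]_n.+2) :
  strictly_upper t -> nonzero_superdiag t -> corner_regular_transverse t.
Proof.
move=> t_su t_sd.
have tn_su : strictly_upper (corner t).
  by move=> i j ji; rewrite mxE t_su // !val_lift_max.
have tn_sd : nonzero_superdiag (corner t).
  by move=> i j ji; rewrite mxE t_sd // !val_lift_max.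
split=> [|y yt ytn]; first exact: strictly_upper_regular_nilpotent.
apply: (cent_strictly_upper_eq0 (v := last_col t) tn_su tn_sd _ yt).
  by rewrite /last_col mxE t_sd // val_lift_max.
exact: cent_embed_mul_last_col.
Qed.

Lemma regular_nilpotent_upper_tri N (t : 'M[CC]_N.+1) :
  regular_nilpotent t -> upper_tri t -> strictly_upper t /\ nonzero_superdiag t.
Proof.
move=> reg t_up; have [[k tk0] _] := reg.
have t_su := nilpotent_upper_strictly_upper t_up tk0.
by split=> //; apply/strictly_upper_expn_neq0/regular_nilpotent_expn_neq0.
Qed.

Theorem proposition3p11 (n : nat) (hn : (0 < n)%N) (x : 'M[CC]_n.+1) :
  regular_nilpotent x ->
  (in_borel_Qplus x \/ in_borel_Qminus x) ->
  regular_nilpotent (corner x) /\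
  (forall y : 'M[CC]_n,
      y *m corner x = corner x *m y ->
      embed y *m x = x *m embed y ->
      y = 0).
Proof.
case: n hn x => [//|n] _ x x_reg x_borel.
have [k kK t_tri] : exists2 k, in_K k &
    upper_tri (invmx k *m x *m k) \/ lower_tri (invmx k *m x *m k).
  by case: x_borel => -[k kK tri]; exists k => //; [left | right].
apply: (corner_regular_transverse_conj kK); set t := invmx k *m x *m k.
have t_reg : regular_nilpotent t by rewrite regular_nilpotent_conj //; case: kK.
case: t_tri => [t_up | t_lo].
  have [t_su t_sd] := regular_nilpotent_upper_tri t_reg t_up.
  exact: strictly_upper_corner_regular_transverse.
apply: corner_regular_transverse_tr.
have tT_reg : regular_nilpotent t^T by rewrite regular_nilpotent_tr.
have tT_up : upper_tri t^T by move=> i j ji; rewrite mxE t_lo.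
have [tT_su tT_sd] := regular_nilpotent_upper_tri tT_reg tT_up.
exact: strictly_upper_corner_regular_transverse.
Qed.
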